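(* Let $G$ be a forcibly terminating mean-payoff game with limited-observation. Then either Eve or Adam has a winning observation-based strategy with finite memory in $G$.
   Context: An MPG with limited-observation is a tuple $G=\langle Q,q_I,\Sigma,\Delta,w,Obs\rangle$: $Q$ finite, $q_I\in Q$, $\Sigma$ finite, $\Delta\subseteq Q\times\Sigma\times Q$ total, $w:\Delta\to\mathbb{Z}$, $Obs$ a partition of $Q$ with $\{q_I\}\in Obs$ and $\mathrm{post}_\sigma(o)=\{q':\exists q\in o,(q,\sigma,q')\in\Delta\}$ a union of elements of $Obs$ for all $o\in Obs,\sigma\in\Sigma$. Plays are infinite abstract paths $o_0\sigma_0o_1\ldots$ starting at $\{q_I\}$ (consecutive observations linked by some $\sigma_i$-transition); $\gamma(\psi)$ is the set of concrete paths $q_0\sigma_0q_1\ldots$ with $q_i\in o_i$, $(q_i,\sigma_i,q_{i+1})\in\Delta$; $\underline{MP}(\pi)=\liminf_n\frac1n\sum_{i<n}w(q_i,\sigma_i,q_{i+1})$; a play is winning for Eve if $\underline{MP}(\pi)\ge0$ for all $\pi\in\gamma(\psi)$, else for Adam. Observation-based strategies: Eve $\lambda_\exists:\mathrm{Prefs}(G)\to\Sigma$ (prefixes of plays ending in an observation); Adam $\lambda_\forall:\mathrm{Prefs}(G)\times\Sigma\to Obs$ with $\lambda_\forall(o_0\ldots o_n,\sigma)\cap\mathrm{post}_\sigma(o_n)\ne\emptyset$; winning if all consistent plays are winning for that player. Finite memory: realized by a finite set $M$, initial $m_0$, update $\alpha_u$ and output $\alpha_o$ functions reading the current observation (and, for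 Adam, the action) as in the usual Mealy-machine sense. Reachability game $\Gamma_G$: $\mathcal{F}$ is the set of $f:Q\to\mathbb{Z}\cup\{+\infty,\bot\}$, $\mathrm{supp}(f)=\{q:f(q)\ne\bot\}$; $f'$ is a $\sigma$-successor of $f$ if $\mathrm{supp}(f')\in Obs$, $\mathrm{supp}(f')\subseteq\mathrm{post}_\sigma(\mathrm{supp}(f))$ and each $f'(q)$, $q\in\mathrm{supp}(f')$, is $\min\{f(q')+w(q',\sigma,q):q'\in\mathrm{supp}(f),(q',\sigma,q)\in\Delta\}$ or $+\infty$. $f\preceq_k f'$ iff $\mathrm{supp}(f)=\mathrm{supp}(f')$ and $f(q)+k\le f'(q)$ on the support ($+\infty+k=+\infty$). $f_I(q_I)=0$, else $\bot$. $\Pi_G$: sequences $f_0\sigma_0\ldots f_n$ with $f_0=f_I$, $f_{i+1}$ a $\sigma_i$-successor of $f_i$, and $f_i\not\preceq_0f_j$, $f_j\not\preceq_1 f_i$ for $0\le i<j<n$. $\mathcal{T}_\exists$: such sequences with $f_i\preceq_0 f_n$ for some $i<n$; $\mathcal{T}_\forall$: such sequences with $f_n\preceq_1 f_i$ and $f_i(q)\ne+\infty$ for some $q\in\mathrm{supp}(f_i)$, for some $i<n$. In $\Gamma_G$, starting at $f_I$, Eve picks $\sigma$, Adam picks $f$ with $x\sigma f\in\Pi_G$; Eve wins upon reaching $\mathcal{T}_\exists$, Adam upon reaching $\mathcal{T}_\forall$. $G$ is forcibly terminating if in $\Gamma_G$ either Eve has a strategy ensuring $\mathcal{T}_\exists$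 is reached or Adam has a strategy ensuring $\mathcal{T}_\forall$ is reached. *)

From HB Require Import structures.
From mathcomp Require Import all_boot all_order all_algebra.
Import Order.TTheory GRing.Theory Num.Theory.
Local Open Scope ring_scope.

Record mpg := MPG {
  St : finType;
  Act : finType;
  qI : St;
  Delta : St -> Act -> St -> bool;
  wt : St -> Act -> St -> int;           (* weights (relevant on Delta) *)
  Obs : {set {set St}}
}.

Definition post (G : mpg) (s : Act G) (o : {set St G}) : {set St G} :=
  [set q' | [exists q in o, Delta G q s q']].

Definition wf_mpg (G : mpg) : Prop :=
  partition (Obs G) [set: St G] /\
  [set qI G] \in Obs G /\
  (forall (q : St G) (s : Act G), exists q' : St G, Delta G q s q') /\
  (forall (o : {set St G}) (s : Act G), o \in Obs G ->
     exists S : {set {set St G}}, S \subset Obs G /\ post G s o = cover S).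

Definition valid_play (G : mpg) (o : nat -> {set St G}) (a : nat -> Act G) : Prop :=
  o 0%N = [set qI G] /\
  (forall i, o i \in Obs G) /\
  (forall i, [exists q in o i, exists q' in o i.+1, Delta G q (a i) q']).

Definition valid_prefix (G : mpg) (o : nat -> {set St G}) (a : nat -> Act G)
    (n : nat) : Prop :=
  o 0%N = [set qI G] /\
  (forall i, (i <= n)%N -> o i \in Obs G) /\
  (forall i, (i < n)%N -> [exists q in o i, exists q' in o i.+1, Delta G q (a i) q']).

Definition concretization (G : mpg) (o : nat -> {set St G}) (a : nat -> Act G)
    (q : nat -> St G) : Prop :=
  forall i, q i \in o i /\ Delta G (q i) (a i) (q i.+1).

(* liminf_n (1/n) sum_{i<n} u_i >= 0, with liminf written out:
   for every eps > 0, eventually (1/n) sum_{i<n} u_i >= -eps. *)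
Definition mp_nonneg (u : nat -> int) : Prop :=
  forall eps : rat, 0 < eps ->
    exists N : nat, forall n : nat, (N <= n)%N ->
      - (eps * n%:R) <= (\sum_(i < n) u i)%:~R.

Definition eve_wins_play (G : mpg) (o : nat -> {set St G}) (a : nat -> Act G) : Prop :=
  forall q : nat -> St G, concretization G o a q ->
    mp_nonneg (fun i => wt G (q i) (a i) (q i.+1)).

Fixpoint memE (G : mpg) (M : Type) (m0 : M) (up : M -> {set St G} -> M)
    (o : nat -> {set St G}) (n : nat) : M :=
  match n with
  | 0 => m0
  | k.+1 => up (memE G M m0 up o k) (o k)
  end.

Definition eve_fm_winning (G : mpg) : Prop :=
  exists (M : finType) (m0 : M) (up : M -> {set St G} -> M)
         (out : M -> {set St G} -> Act G),
    forall (o : nat -> {set St G}) (a : nat -> Act G),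
      valid_play G o a ->
      (forall n, a n = out (memE G M m0 up o n) (o n)) ->
      eve_wins_play G o a.

Fixpoint memA (G : mpg) (M : Type) (m0 : M) (up : M -> {set St G} -> Act G -> M)
    (o : nat -> {set St G}) (a : nat -> Act G) (n : nat) : M :=
  match n with
  | 0 => m0
  | k.+1 => up (memA G M m0 up o a k) (o k) (a k)
  end.

Definition adam_fm_winning (G : mpg) : Prop :=
  exists (M : finType) (m0 : M) (up : M -> {set St G} -> Act G -> M)
         (out : M -> {set St G} -> Act G -> {set St G}),
    (forall (o : nat -> {set St G}) (a : nat -> Act G) (n : nat),
       valid_prefix G o a n ->
       (forall i, (i < n)%N -> o i.+1 = out (memA G M m0 up o a i) (o i) (a i)) ->
       forall s : Act G,
         out (memA G M m0 up o a n) (o n) s \in Obs G /\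
         out (memA G M m0 up o a n) (o n) s :&: post G s (o n) != set0) /\
    (forall (o : nat -> {set St G}) (a : nat -> Act G),
       valid_play G o a ->
       (forall n, o n.+1 = out (memA G M m0 up o a n) (o n) (a n)) ->
       ~ eve_wins_play G o a).

Inductive ext := EFin of int | EInf | EBot.

Definition is_bot (e : ext) : bool := if e is EBot then true else false.

Definition supp (G : mpg) (f : St G -> ext) : {set St G} :=
  [set q | ~~ is_bot (f q)].

Definition addw (e : ext) (k : int) : ext :=
  match e with EFin z => EFin (z + k) | e' => e' end.

Definition le_ext (e1 e2 : ext) : Prop :=
  match e1, e2 with
  | EFin a, EFin b => a <= b
  | EFin _, EInf => True
  | EInf, EInf => True
  | _, _ => False
  end.

Definition is_min (P : ext -> Prop) (e : ext) : Prop :=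
  P e /\ forall e', P e' -> le_ext e e'.

Definition cands (G : mpg) (f : St G -> ext) (s : Act G) (q : St G) (e : ext) : Prop :=
  exists q', q' \in supp G f /\ Delta G q' s q /\ e = addw (f q') (wt G q' s q).

Definition successor (G : mpg) (f : St G -> ext) (s : Act G) (f' : St G -> ext) : Prop :=
  supp G f' \in Obs G /\
  supp G f' \subset post G s (supp G f) /\
  (forall q, q \in supp G f' -> is_min (cands G f s q) (f' q) \/ f' q = EInf).

Definition preceq (G : mpg) (k : int) (f f' : St G -> ext) : Prop :=
  supp G f = supp G f' /\
  (forall q, q \in supp G f -> le_ext (addw (f q) k) (f' q)).

Definition fI (G : mpg) (q : St G) : ext := if q == qI G then EFin 0 else EBot.

(* A sequence f_0 s_0 f_1 ... s_{n-1} f_n, stored as (f_0, [(s_0,f_1);...]). *)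
Definition gpos (G : mpg) : Type := ((St G -> ext) * seq (Act G * (St G -> ext)))%type.

Definition glen (G : mpg) (x : gpos G) : nat := size x.2.

Definition gf (G : mpg) (x : gpos G) (i : nat) : St G -> ext :=
  nth x.1 (x.1 :: map snd x.2) i.

Fixpoint succ_chain (G : mpg) (f : St G -> ext) (s : seq (Act G * (St G -> ext))) : Prop :=
  match s with
  | [::] => True
  | (a, f') :: s' => successor G f a f' /\ succ_chain G f' s'
  end.

Definition gextend (G : mpg) (x : gpos G) (s : Act G) (f : St G -> ext) : gpos G :=
  (x.1, rcons x.2 (s, f)).

Definition ginit (G : mpg) : gpos G := (fI G, [::]).

Definition InPi (G : mpg) (x : gpos G) : Prop :=
  (forall q, x.1 q = fI G q) /\
  succ_chain G x.1 x.2 /\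
  (forall i j, (i < j)%N -> (j < glen G x)%N ->
     ~ preceq G 0 (gf G x i) (gf G x j) /\ ~ preceq G 1 (gf G x j) (gf G x i)).

Definition TE (G : mpg) (x : gpos G) : Prop :=
  InPi G x /\ exists i, (i < glen G x)%N /\ preceq G 0 (gf G x i) (gf G x (glen G x)).

Definition TA (G : mpg) (x : gpos G) : Prop :=
  InPi G x /\ exists i, (i < glen G x)%N /\
    preceq G 1 (gf G x (glen G x)) (gf G x i) /\
    exists q, q \in supp G (gf G x i) /\ gf G x i q <> EInf.

Definition nonterminal (G : mpg) (x : gpos G) : Prop := ~ TE G x /\ ~ TA G x.

Definition eve_forces (G : mpg) (tau : gpos G -> Act G) : Prop :=
  forall xs : nat -> gpos G,
    xs 0%N = ginit G ->
    (forall k, nonterminal G (xs k) ->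
       exists f, xs k.+1 = gextend G (xs k) (tau (xs k)) f /\ InPi G (xs k.+1)) ->
    exists k, TE G (xs k) /\ forall j, (j < k)%N -> nonterminal G (xs j).

Definition adam_forces (G : mpg) (rho : gpos G -> Act G -> (St G -> ext)) : Prop :=
  (forall x s, InPi G x -> nonterminal G x -> InPi G (gextend G x s (rho x s))) /\
  forall xs : nat -> gpos G,
    xs 0%N = ginit G ->
    (forall k, nonterminal G (xs k) ->
       exists s, xs k.+1 = gextend G (xs k) s (rho (xs k) s)) ->
    exists k, TA G (xs k) /\ forall j, (j < k)%N -> nonterminal G (xs j).

Definition forcibly_terminating (G : mpg) : Prop :=
  (exists tau, eve_forces G tau) \/ (exists rho, adam_forces G rho).

(* Both players play the reachability game Gamma_G "inside" G.  A strategy of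
   the player who forces termination is simulated on a position of Gamma_G built
   from the observations (for Eve, Adam being assumed to answer with least
   successor functions) or from the actions (for Adam) seen so far.  When the
   simulated position becomes terminal, it is cut back to the earlier position
   witnessing termination; by Konig's lemma, termination is forced within a
   bounded number of moves, so finitely many positions, hence a finite memory,
   suffice.
   For Eve, the value f(q) of the current function never exceeds the payoff of
   a concrete path reaching q, and cuts along f_i <=_0 f_n only lower values;
   as there are finitely many values, payoffs are bounded below.  For Adam,
   each cut along f_n <=_1 f_i lowers values by one and happens at least once
   every D steps; Konig's lemma then gives a concrete path whose payoff after
   n steps is at most C - n/D, so its mean payoff is negative. *)

From Pilot Require Import Defs.
From mathcomp Require Import all_boot all_order all_algebra zify.
From Stdlib Require Import Classical ClassicalEpsilon.
Import Order.TTheory GRing.Theory Num.Theory.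

Set Implicit Arguments.
Unset Strict Implicit.
Unset Printing Implicit Defensive.

Section MeanPayoff.
Local Open Scope ring_scope.
Variable u : nat -> int.

Lemma mp_nonneg_bounded_below (C : nat) :
  (forall n, - (C%:Z) <= \sum_(i < n) u i) -> mp_nonneg u.
Proof.
move=> lbC eps eps_gt0.
have C_eps_ge0 : 0 <= C%:R / eps by rewrite divr_ge0 // ltW.
exists (Num.bound (C%:R / eps)) => n le_bound_n.
have C_le : C%:R <= eps * n%:R.
  rewrite mulrC -ler_pdivrMr //; apply: le_trans (ltW (archi_boundP C_eps_ge0)) _.
  by rewrite ler_nat.
apply: le_trans (_ : - (C%:R) <= _); first by rewrite lerN2.
by have := lbC n; rewrite -(ler_int rat) intrN.
Qed.

(* With [eps = 1/2D], eventually [-n <= 2D * S_n <= 2K - 2n], so [n <= 2K]. *)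
Lemma mp_neg_of_linear_decrease (D K : nat) : (0 < D)%N ->
  (forall n, D%:Z * (\sum_(i < n) u i) + n%:Z <= K%:Z) -> ~ mp_nonneg u.
Proof.
move=> D_gt0 decr mpu.
have twoD_gt0 : (0 : rat) < (2 * D)%:R by rewrite ltr0n muln_gt0.
have [N HN] : exists N, forall n, (N <= n)%N ->
    - (((2 * D)%:R : rat)^-1 * n%:R) <= (\sum_(i < n) u i)%:~R.
  by apply: mpu; rewrite invr_gt0.
pose n := (N + (2 * K).+1)%N.
have : - (n%:Z) <= (2 * D)%:Z * (\sum_(i < n) u i).
  rewrite -(ler_int rat) intrN intrM /=.
  have := ler_wpM2l (ltW twoD_gt0) (HN n (leq_addr _ _)).
  by rewrite mulrN mulrA mulfV ?gt_eqF // mul1r; apply.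
have := decr n; rewrite /n; lia.
Qed.

End MeanPayoff.

Section Konig.
Variables (T : finType) (P : seq T -> Prop).
Hypothesis P_rcons : forall p t, P (rcons p t) -> P p.

Lemma P_cat p q : P (p ++ q) -> P p.
Proof.
elim/last_ind: q => [|q t IHq]; first by rewrite cats0.
by rewrite -rcons_cat => /P_rcons.
Qed.

Definition extendable p := forall N, exists q, P (p ++ q) /\ (N <= size q)%N.

(* The finitely many one-letter extensions of [p] cannot all have bounded depth. *)
Lemma extendable_rcons p : extendable p -> exists t, extendable (rcons p t).
Proof.
move=> ext_p; apply: NNPP => no_ext.
have depth t : exists N, forall q, P (rcons p t ++ q) -> (size q < N)%N.
  apply: NNPP => unbounded; apply: no_ext; exists t => N.
  apply: NNPP => no_q; apply: unbounded; exists N => q Pq.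
  by rewrite ltnNge; apply/negP => le_N; apply: no_q; exists q.
have [Nt Nt_bound] : exists Nt : T -> nat,
    forall t q, P (rcons p t ++ q) -> (size q < Nt t)%N.
  exists (fun t => proj1_sig (constructive_indefinite_description _ (depth t))) => t.
  exact: (proj2_sig (constructive_indefinite_description _ (depth t))).
have [[|t q] [Pq le_q]] := ext_p (\max_t Nt t).+1 => //.
have := Nt_bound t q; rewrite cat_rcons => /(_ Pq); rewrite ltnNge => /negP; apply.
exact: leq_trans (leq_bigmax t) _.
Qed.

Lemma konig : (forall N, exists p, P p /\ (N <= size p)%N) ->
  exists c : nat -> T, forall n, P (mkseq c n).
Proof.
move=> long.
have [[|t0 p0] [_ //]] := long 1%N.
pose next p := match excluded_middle_informative (exists t, extendable (rcons p t)) with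
  | left H => proj1_sig (constructive_indefinite_description _ H)
  | right _ => t0 end.
have nextP p : extendable p -> extendable (rcons p (next p)).
  move=> ext_p; rewrite /next; case: excluded_middle_informative => [H|[]].
    exact: proj2_sig (constructive_indefinite_description _ H).
  exact: extendable_rcons.
pose fix branch n := if n is n'.+1 then rcons (branch n') (next (branch n')) else [::].
exists (fun n => next (branch n)) => n.
have -> : mkseq (fun n => next (branch n)) n = branch n.
  by elim: n => [|n IHn] //; rewrite mkseqS IHn.
have ext_branch : extendable (branch n).
  elim: n => [|n IHn] /=; last exact: nextP.
  by move=> N; have [p [Pp le_p]] := long N; exists p.
by have [q [Pq _]] := ext_branch 0%N; apply: P_cat Pq.
Qed.

Lemma konig_bound : ~ (exists c : nat -> T, forall n, P (mkseq c n)) ->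
  exists N, forall p, P p -> (size p < N)%N.
Proof.
move=> no_branch; apply: NNPP => unbounded; apply: no_branch; apply: konig => N.
apply: NNPP => no_p; apply: unbounded; exists N => p Pp.
by rewrite ltnNge; apply/negP => le_N; apply: no_p; exists p.
Qed.

End Konig.

Section ValuedPath.
Variables (S : finType) (value : nat -> S -> ext) (edge : nat -> S -> S -> bool).
Variable u : nat -> S -> S -> int.

Definition path_sum (q0 : S) (p : seq S) (k : nat) : int :=
  \sum_(i < k) u i (nth q0 p i) (nth q0 p i.+1).

Definition valued_path (p : seq S) := forall q0 k, (k < size p)%N ->
  ((k.+1 < size p)%N -> edge k (nth q0 p k) (nth q0 p k.+1)) /\
  exists2 z, value k (nth q0 p k) = EFin z & (path_sum q0 p k <= z)%R.

Lemma path_sum_rcons q0 p x k : (k < size p)%N -> path_sum q0 (rcons p x) k = path_sum q0 p k.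
Proof.
move=> lt_k; apply: eq_bigr => i _.
have lt_i1 : (i.+1 < size p)%N by apply: leq_ltn_trans lt_k.
by rewrite !nth_rcons lt_i1 (ltn_trans (ltnSn i) lt_i1).
Qed.

Lemma valued_path_rcons p x : valued_path (rcons p x) -> valued_path p.
Proof.
move=> vp q0 k lt_k; have lt_k' : (k < size (rcons p x))%N by rewrite size_rcons ltnW.
have [edge_k [z val_k le_z]] := vp q0 k lt_k'.
rewrite nth_rcons lt_k path_sum_rcons // in val_k le_z.
split=> [lt_k1|]; last by exists z.
by move: edge_k; rewrite size_rcons ltnS ltnW // !nth_rcons lt_k lt_k1; apply.
Qed.

Hypothesis value0 : forall q z, value 0 q = EFin z -> (0 <= z)%R.
Hypothesis value_back : forall n q z, value n.+1 q = EFin z ->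
  exists q' z', [/\ edge n q' q, value n q' = EFin z' & (z' + u n q' q <= z)%R].

Lemma valued_path_to n q z : value n q = EFin z ->
  exists2 p, valued_path (rcons p q) & size p = n.
Proof.
elim: n q z => [|n IHn] q z val_q.
  exists [::] => // q0 [|//] _; split=> //.
  by exists z; rewrite // /path_sum big_ord0; apply: value0 val_q.
have [q' [z' [edge_n val_q' le_z]]] := value_back val_q.
have [p vp size_p] := IHn _ _ val_q'.
exists (rcons p q'); last by rewrite size_rcons size_p.
have last_q q0 : nth q0 (rcons (rcons p q') q) n.+1 = q.
  by rewrite nth_rcons size_rcons size_p ltnn eqxx.
have last_q' q0 : nth q0 (rcons (rcons p q') q) n = q'.
  by rewrite nth_rcons size_rcons size_p ltnSn nth_rcons size_p ltnn eqxx.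
move=> q0 k; rewrite !size_rcons size_p ltnS leq_eqVlt => /orP [/eqP ->|lt_k].
  split; first by rewrite ltnn.
  exists z; rewrite ?last_q // /path_sum big_ord_recr /= -/(path_sum q0 _ n) last_q last_q'.
  rewrite path_sum_rcons ?size_rcons ?size_p //.
  have lt_n : (n < size (rcons p q'))%N by rewrite size_rcons size_p.
  have [_ [z'' val_n le_n]] := vp q0 n lt_n.
  rewrite nth_rcons size_p ltnn eqxx val_q' in val_n; case: val_n => <- in le_n.
  by apply: le_trans le_z; rewrite lerD2r.
have lt_k' : (k < size (rcons p q'))%N by rewrite size_rcons size_p.
have nth_old i : (i < size (rcons p q'))%N ->
    nth q0 (rcons (rcons p q') q) i = nth q0 (rcons p q') i.
  by move=> lt_i; rewrite nth_rcons lt_i.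
have [edge_k [z1 val_k le_z1]] := vp q0 k lt_k'.
rewrite nth_old // path_sum_rcons //; split; last by exists z1.
move=> _; case: (ltnP k.+1 (size (rcons p q'))) => [lt_k1|].
  by rewrite nth_old //; apply: edge_k.
rewrite size_rcons size_p ltnS => le_nk.
have -> : k = n by apply/eqP; rewrite eqn_leq le_nk -ltnS lt_k.
by rewrite last_q nth_rcons size_p ltnn eqxx.
Qed.

Hypothesis value_often : forall N, exists n q z, (N <= n)%N /\ value n q = EFin z.

Lemma konig_valued_path : exists c : nat -> S, forall n,
  edge n (c n) (c n.+1) /\
  exists2 z, value n (c n) = EFin z & (\sum_(i < n) u i (c i) (c i.+1) <= z)%R.
Proof.
have [|c vc] := konig valued_path_rcons.
  move=> N; have [n [q [z [le_N val_q]]]] := value_often N.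
  have [p vp size_p] := valued_path_to val_q.
  by exists (rcons p q); split=> //; rewrite size_rcons size_p ltnW.
have nth_c n i : (i <= n)%N -> nth (c 0%N) (mkseq c n.+2) i = c i.
  by move=> le_i; rewrite nth_mkseq // ltnW.
exists c => n.
have [|edge_n [z val_n le_z]] := vc n.+2 (c 0%N) n; first by rewrite size_mkseq ltnW.
split; first by move: edge_n; rewrite size_mkseq !nth_mkseq ?ltnSn ?leqnSn //; apply.
exists z; first by rewrite -(nth_c n n).
suff -> : (\sum_(i < n) u i (c i) (c i.+1))%R = path_sum (c 0%N) (mkseq c n.+2) n by [].
by apply: eq_bigr => i _; rewrite !nth_c // ltnW.
Qed.

End ValuedPath.

Lemma le_ext_trans a b c : le_ext a b -> le_ext b c -> le_ext a c.
Proof. by case: a; case: b; case: c => //= x y z; apply: le_trans. Qed.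

Lemma le_ext_nbot a b : le_ext a b -> ~~ is_bot a /\ ~~ is_bot b.
Proof. by case: a; case: b. Qed.

Lemma le_ext_EFin e b : le_ext (addw e 0) (EFin b) -> exists2 z, e = EFin z & (z <= b)%R.
Proof. by case: e => //= z; rewrite addr0; exists z. Qed.

Definition emin (e1 e2 : ext) : ext :=
  match e1, e2 with
  | EBot, _ => e2
  | _, EBot => e1
  | EFin a, EFin b => EFin (Order.min a b)
  | EFin a, EInf => EFin a
  | EInf, _ => e2
  end.

Lemma eminE a b : emin a b = a \/ emin a b = b.
Proof.
case: a; case: b => /=; try by [left|right].
by move=> x y; rewrite /Order.min; case: ifP; [left|right].
Qed.

Lemma emin_lel a b : ~~ is_bot a -> le_ext (emin a b) a.
Proof. by case: a; case: b => //= *; rewrite ?lexx // ge_min lexx ?orbT. Qed.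

Lemma emin_ler a b : ~~ is_bot b -> le_ext (emin a b) b.
Proof. by case: a; case: b => //= *; rewrite ?lexx // ge_min lexx ?orbT. Qed.

Lemma addw_nbot e k : ~~ is_bot e -> ~~ is_bot (addw e k).
Proof. by case: e. Qed.

Lemma addw_EFin e k z : addw e k = EFin z -> e = EFin (z - k)%R.
Proof. by case: e => //= y [<-]; rewrite addrK. Qed.

Definition absn (e : ext) : nat := if e is EFin z then absz z else 0%N.

Definition ext_bound (M S : finType) (F : M -> S -> ext) : nat :=
  \sum_(m : M) \sum_(q : S) absn (F m q).

Lemma ext_boundP (M S : finType) (F : M -> S -> ext) m q z :
  F m q = EFin z -> (absz z <= ext_bound F)%N.
Proof.
move=> Fmq; rewrite /ext_bound (bigD1 m) //= (bigD1 q) //= Fmq /=.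
by rewrite -addnA leq_addr.
Qed.

Section Successor.
Variable G : mpg.
Implicit Types (f : St G -> ext) (s : Act G) (q : St G).

Definition fin_on f := forall q, q \in supp G f -> exists z, f q = EFin z.

Section MinCandidate.
Variables (f : St G -> ext) (s : Act G) (q : St G).

Definition cand_ok q' := (q' \in supp G f) && Delta G q' s q.
Definition cand_val q' := addw (f q') (wt G q' s q).

Definition min_cand_seq (l : seq (St G)) : ext :=
  foldr (fun q' e => if cand_ok q' then emin (cand_val q') e else e) EBot l.

Definition min_cand := min_cand_seq (enum (St G)).

Lemma cand_val_nbot q' : cand_ok q' -> ~~ is_bot (cand_val q').
Proof. by case/andP; rewrite inE => /addw_nbot nb _; apply: nb. Qed.

Lemma min_cand_seq_le l q' :
  q' \in l -> cand_ok q' -> le_ext (min_cand_seq l) (cand_val q').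
Proof.
elim: l => [|x l IHl] //=; rewrite inE => /orP [/eqP <-|q'l] okq'.
  by rewrite okq'; apply/emin_lel/cand_val_nbot.
have le_l := IHl q'l okq'.
by case: ifP => // _; apply: le_ext_trans (emin_ler _ (le_ext_nbot le_l).1) le_l.
Qed.

Lemma min_cand_seq_attained l : min_cand_seq l = EBot \/
  exists2 q', cand_ok q' & min_cand_seq l = cand_val q'.
Proof.
elim: l => [|x l IHl] /=; first by left.
case: ifP => okx; last exact: IHl.
right; case: IHl => [->|[q' okq' ->]].
  by exists x => //; case: (cand_val x) (cand_val_nbot okx).
by case: (eminE (cand_val x) (cand_val q')) => ->; [exists x | exists q'].
Qed.

Lemma min_cand_le q' : cand_ok q' -> le_ext min_cand (cand_val q').
Proof. exact/min_cand_seq_le/mem_enum. Qed.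

Lemma min_candP q' : cand_ok q' -> is_min (cands G f s q) min_cand.
Proof.
move=> okq'; split.
  rewrite /min_cand.
  case: (min_cand_seq_attained (enum (St G))) => [Ebot|[q'' /andP [q''f dq''] ->]].
    by have := min_cand_le okq'; rewrite /min_cand Ebot.
  by exists q''.
move=> e [q'' [q''f [dq'' ->]]]; apply: min_cand_le.
by rewrite /cand_ok q''f.
Qed.

Lemma min_cand_fin q' : fin_on f -> cand_ok q' -> exists z, min_cand = EFin z.
Proof.
move=> finf okq'; rewrite /min_cand.
case: (min_cand_seq_attained (enum (St G))) => [Ebot|[q'' /andP [/finf [z fz] _] ->]].
  by have := min_cand_le okq'; rewrite /min_cand Ebot.
by rewrite /cand_val fz; eexists.
Qed.

End MinCandidate.

Lemma preceq0_refl f : preceq G 0 f f.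
Proof. by split => // q; rewrite inE; case: (f q) => //= z _; rewrite addr0. Qed.

End Successor.

Section Positions.
Variable G : mpg.
Implicit Types (x : gpos G) (f : St G -> ext) (s : Act G).

Definition lastf x := gf G x (glen G x).

Lemma glen_gextend x s f : glen G (gextend G x s f) = (glen G x).+1.
Proof. by rewrite /glen size_rcons. Qed.

Lemma gf_gextend x s f i : (i <= glen G x)%N -> gf G (gextend G x s f) i = gf G x i.
Proof. by case: i => [|i] //= le_i; rewrite /gf /= map_rcons nth_rcons size_map le_i. Qed.

Lemma lastf_gextend x s f : lastf (gextend G x s f) = f.
Proof.
by rewrite /lastf glen_gextend /gf /= map_rcons nth_rcons size_map ltnn eqxx.
Qed.

Lemma lastfE x : lastf x = last x.1 (map snd x.2).
Proof. by have := nth_last x.1 (x.1 :: map snd x.2); rewrite /= size_map. Qed.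

Lemma succ_chain_rcons f l s f' : succ_chain G f (rcons l (s, f')) <->
  succ_chain G f l /\ successor G (last f (map snd l)) s f'.
Proof. by elim: l f => [|[a g] l IHl] f /=; [tauto | rewrite IHl; tauto]. Qed.

Lemma InPi_gextend_succ x s f : InPi G (gextend G x s f) -> successor G (lastf x) s f.
Proof. by case=> _ [/succ_chain_rcons [_]]; rewrite lastfE. Qed.

Lemma successor_back f s f' q z : successor G f s f' -> f' q = EFin z ->
  exists q', [/\ q' \in supp G f, Delta G q' s q & f q' = EFin (z - wt G q' s q)%R].
Proof.
case=> _ [_ min_f'] f'q; have : q \in supp G f' by rewrite inE f'q.
case/min_f' => [[[q' [q'f [dq' Ecand]]] _]|]; last by rewrite f'q.
by exists q'; split=> //; apply: addw_EFin; rewrite -Ecand.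
Qed.

(* Moving from a non-terminal position stays in Pi_G, provided no earlier
   function is identically +oo (otherwise T_forall could not be witnessed). *)
Lemma InPi_gextend x s f : InPi G x -> nonterminal G x ->
  (forall i, (i < glen G x)%N -> exists q, q \in supp G (gf G x i) /\ gf G x i q <> EInf) ->
  successor G (lastf x) s f -> InPi G (gextend G x s f).
Proof.
move=> [x1 [chain_x anti_x]] [notTE notTA] fin_x succ_f; split=> //; split.
  by rewrite /= succ_chain_rcons -lastfE.
move=> i j lt_ij; rewrite glen_gextend ltnS leq_eqVlt => /orP [/eqP Ej|lt_j].
  have lt_i : (i < glen G x)%N by rewrite -Ej.
  rewrite !gf_gextend ?Ej ?(ltnW lt_i) //; split=> prec.
    by apply: notTE; split=> //; exists i.
  by apply: notTA; split=> //; exists i; split=> //; split=> //; apply: fin_x.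
by rewrite !gf_gextend ?(ltnW lt_j) ?(ltnW (ltn_trans lt_ij lt_j)) //; apply: anti_x.
Qed.

Lemma ginit_nonterm : nonterminal G (ginit G).
Proof. by split; case=> _ [i []]. Qed.

Lemma ginit_InPi : InPi G (ginit G).
Proof. by split=> //; split. Qed.

Lemma supp_fI : supp G (fI G) = [set qI G].
Proof. by apply/setP => q; rewrite !inE /fI; case: eqP. Qed.

End Positions.

Section Observations.
Variable G : mpg.
Hypothesis wfG : wf_mpg G.

Lemma obs_neq0 o : o \in Obs G -> o != set0.
Proof. by case: wfG => partG _; apply: partition_neq0 partG. Qed.

Lemma obs_cover q : exists2 o, o \in Obs G & q \in o.
Proof.
case: wfG => /and3P [/eqP coverG _ _] _.
have /bigcupP [o oG qo] : q \in cover (Obs G) by rewrite coverG inE.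
by exists o.
Qed.

Lemma obs_eq o o' q : o \in Obs G -> o' \in Obs G -> q \in o -> q \in o' -> o = o'.
Proof.
case: wfG => /partition_trivIset trivG _ oG o'G qo qo'.
by rewrite -(def_pblock trivG oG qo) -(def_pblock trivG o'G qo').
Qed.

Lemma in_post s o q : (q \in post G s o) = [exists q' in o, Delta G q' s q].
Proof. by rewrite inE. Qed.

(* Since post_s(o') is a union of observations, an observation meeting it lies in it. *)
Lemma obs_sub_post o o' s : o \in Obs G -> o' \in Obs G ->
  o :&: post G s o' != set0 -> o \subset post G s o'.
Proof.
case: wfG => _ [_ [_ post_cover]] oG o'G /set0Pn [q]; rewrite inE => /andP [qo qpost].
have [S [SG postE]] := post_cover o' s o'G.
move: qpost; rewrite postE => /bigcupP [B BS qB].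
rewrite (obs_eq oG (subsetP SG _ BS) qo qB).
by apply/subsetP => q' q'B; apply/bigcupP; exists B.
Qed.

End Observations.

Definition pick_below (P : nat -> Prop) (n : nat) : nat :=
  match excluded_middle_informative (exists i, (i < n)%N /\ P i) with
  | left H => proj1_sig (constructive_indefinite_description _ H)
  | right _ => n
  end.

Lemma pick_belowP P n : (exists i, (i < n)%N /\ P i) ->
  (pick_below P n < n)%N /\ P (pick_below P n).
Proof.
rewrite /pick_below; case: excluded_middle_informative => // H _.
exact: proj2_sig (constructive_indefinite_description _ H).
Qed.

Lemma pick_below_none P n : ~ (exists i, (i < n)%N /\ P i) -> pick_below P n = n.
Proof. by rewrite /pick_below; case: excluded_middle_informative. Qed.

Section Replay.
Variables (G : mpg) (T : finType).
Variables (act : gpos G -> T -> Act G) (resp : gpos G -> T -> St G -> ext).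

Definition stp (x : gpos G) (t : T) := gextend G x (act x t) (resp x t).
Definition rep (cs : seq T) := foldl stp (ginit G) cs.

Lemma rep_rcons cs t : rep (rcons cs t) = stp (rep cs) t.
Proof. by rewrite /rep foldl_rcons. Qed.

Lemma glen_rep cs : glen G (rep cs) = size cs.
Proof.
by elim/last_ind: cs => [|cs t IHcs] //; rewrite rep_rcons glen_gextend IHcs size_rcons.
Qed.

Lemma gf_rep cs i : (i <= size cs)%N -> gf G (rep cs) i = lastf (rep (take i cs)).
Proof.
elim/last_ind: cs i => [|cs t IHcs] i; first by rewrite leqn0 => /eqP ->.
rewrite size_rcons leq_eqVlt => /orP [/eqP ->|].
  by rewrite take_oversize ?size_rcons // /lastf glen_rep size_rcons.
rewrite ltnS => le_i; rewrite rep_rcons gf_gextend ?glen_rep // IHcs //.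
by rewrite -cats1 takel_cat.
Qed.

Variable ok : gpos G -> T -> Prop.

(* [t0] is only a default value for [nth]. *)
Definition legal (cs : seq T) := forall k t0, (k < size cs)%N ->
  nonterminal G (rep (take k cs)) /\ ok (rep (take k cs)) (nth t0 cs k).

Lemma legal_rcons cs t :
  legal (rcons cs t) <-> [/\ legal cs, nonterminal G (rep cs) & ok (rep cs) t].
Proof.
have take_rcons k : (k <= size cs)%N -> take k (rcons cs t) = take k cs.
  by move=> le_k; rewrite -cats1 takel_cat.
split=> [leg|[leg nt okt] k t0].
  have lt_s : (size cs < size (rcons cs t))%N by rewrite size_rcons.
  have [] := leg (size cs) t lt_s.
  rewrite take_rcons // take_size nth_rcons ltnn eqxx => nt okt.
  split=> // k t0 lt_k; have := leg k t0.
  by rewrite size_rcons ltnS (ltnW lt_k) take_rcons ?(ltnW lt_k) // nth_rcons lt_k; apply.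
rewrite size_rcons ltnS leq_eqVlt => /orP [/eqP ->|lt_k].
  by rewrite take_rcons // take_size nth_rcons ltnn eqxx.
by rewrite take_rcons ?(ltnW lt_k) // nth_rcons lt_k; apply: leg.
Qed.

Lemma legal_take cs k : legal cs -> (k < size cs)%N ->
  legal (take k cs) /\ nonterminal G (rep (take k cs)).
Proof.
move=> leg lt_k; have t0 : T by case: (cs) lt_k.
split; last by have [] := leg k t0.
move=> i t1; rewrite size_take lt_k => lt_i.
by rewrite take_takel ?(ltnW lt_i) // nth_take //; apply/leg/(ltn_trans lt_i).
Qed.

Hypothesis ok_InPi : forall x t, InPi G x -> nonterminal G x -> ok x t -> InPi G (stp x t).

Lemma legal_InPi cs : legal cs -> InPi G (rep cs).
Proof.
elim/last_ind: cs => [|cs t IHcs]; first by move=> _; apply: ginit_InPi.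
by case/legal_rcons => leg nt okt; rewrite rep_rcons; apply: ok_InPi (IHcs leg) nt okt.
Qed.

Variable back : gpos G -> nat -> Prop.

Definition reached (x : gpos G) := InPi G x /\ exists i, (i < glen G x)%N /\ back x i.

Hypothesis reached_term : forall x, reached x -> ~ nonterminal G x.
Hypothesis forces : forall xs : nat -> gpos G, xs 0%N = ginit G ->
  (forall k, nonterminal G (xs k) -> exists2 t, ok (xs k) t & xs k.+1 = stp (xs k) t) ->
  exists k, reached (xs k).

Lemma legal_reached cs : legal cs -> ~ nonterminal G (rep cs) -> reached (rep cs).
Proof.
move=> leg term.
have [k] : exists k, reached (rep (take k cs)).
  apply: forces => [|k nt]; first by rewrite take0.
  case: (ltnP k (size cs)) => [lt_k|le_k]; last by case: term; rewrite -(take_oversize le_k).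
  have t0 : T by case: (cs) lt_k.
  have [_ okt] := leg k t0 lt_k.
  by exists (nth t0 cs k) => //; rewrite (take_nth t0 lt_k) rep_rcons.
case: (ltnP k (size cs)) => [lt_k|le_k]; last by rewrite take_oversize.
have t0 : T by case: (cs) lt_k.
by move/reached_term; case: (leg k t0 lt_k).
Qed.

Lemma legal_bounded :
  exists D, forall cs, legal cs -> nonterminal G (rep cs) -> (size cs < D)%N.
Proof.
suff no_branch : ~ exists c : nat -> T,
    forall n, legal (mkseq c n) /\ nonterminal G (rep (mkseq c n)).
  have P_rcons p t : legal (rcons p t) /\ nonterminal G (rep (rcons p t)) ->
      legal p /\ nonterminal G (rep p) by case=> /legal_rcons [].
  have [D boundD] := konig_bound P_rcons no_branch.
  by exists D => cs leg nt; apply: boundD.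
case=> c branch.
have [k] : exists k, reached (rep (mkseq c k)).
  apply: forces => // k _; have := branch k.+1.
  rewrite mkseqS => -[/legal_rcons [_ _ okc] _].
  by exists (c k); rewrite ?rep_rcons.
by move/reached_term; case: (branch k).
Qed.

(* Once a move reaches a terminal position, the sequence is cut back to the
   earlier position witnessing it; this keeps legal sequences bounded. *)
Definition cut (cs : seq T) := take (pick_below (back (rep cs)) (size cs)) cs.

Lemma size_cut cs : (size (cut cs) <= size cs)%N.
Proof. by rewrite size_take; case: ifP => // /ltnW. Qed.

Lemma legal_cut_rcons cs t : legal cs -> nonterminal G (rep cs) -> ok (rep cs) t ->
  [/\ legal (cut (rcons cs t)), nonterminal G (rep (cut (rcons cs t))) &
   cut (rcons cs t) = rcons cs t \/
   exists j, [/\ (j <= size cs)%N, back (stp (rep cs) t) j,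
     size (cut (rcons cs t)) = j & lastf (rep (cut (rcons cs t))) = gf G (stp (rep cs) t) j]].
Proof.
move=> leg nt okt; have leg' : legal (rcons cs t) by apply/legal_rcons.
rewrite /cut -rep_rcons; set y := rep (rcons cs t).
have [nty|termy] := classic (nonterminal G y).
  rewrite pick_below_none ?take_size; first by split=> //; left.
  case=> i [lt_i backi]; apply: (reached_term _ nty); split; first exact: legal_InPi.
  by exists i; rewrite glen_rep.
have [_ [i [lt_i backi]]] := legal_reached leg' termy.
rewrite glen_rep in lt_i.
have [lt_j backj] : (pick_below (back y) (size (rcons cs t)) < size (rcons cs t))%N /\
    back y (pick_below (back y) (size (rcons cs t))) by apply: pick_belowP; exists i.
have [legj ntj] := legal_take leg' lt_j.
split=> //; right; exists (pick_below (back y) (size (rcons cs t))); split=> //.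
- by rewrite -ltnS -(size_rcons cs t).
- by rewrite size_take lt_j.
- by rewrite gf_rep // ltnW.
Qed.

End Replay.

Lemma val_insub_bseq n (T : Type) (s : seq T) : (size s <= n)%N -> val (insub_bseq n s) = s.
Proof. by move=> le_s; rewrite /insub_bseq insubdK. Qed.

Section MinSuccessor.
Variable G : mpg.
Hypothesis wfG : wf_mpg G.
Variables (f : St G -> ext) (s : Act G) (o : {set St G}).

Definition min_succ : St G -> ext := fun q => if q \in o then min_cand f s q else EBot.

Hypothesis o_post : o \subset post G s (supp G f).

Lemma min_succ_cand q : q \in o -> exists q', cand_ok f s q q'.
Proof.
move/(subsetP o_post); rewrite in_post => /existsP [q' /andP [q'f dq']].
by exists q'; apply/andP.
Qed.

Lemma supp_min_succ : supp G min_succ = o.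
Proof.
apply/setP => q; rewrite inE /min_succ; case: ifP => // qo.
have [q' okq'] := min_succ_cand qo.
by have [[q'' [q''f [_ ->]]] _] := min_candP okq'; apply: addw_nbot; rewrite inE in q''f.
Qed.

Lemma min_succ_successor : o \in Obs G -> successor G f s min_succ.
Proof.
move=> oG; rewrite /successor supp_min_succ; split=> //; split=> // q qo; left.
by have [q' okq'] := min_succ_cand qo; rewrite /min_succ qo; apply: min_candP okq'.
Qed.

Lemma min_succ_fin : fin_on f -> fin_on min_succ.
Proof.
move=> finf q; rewrite supp_min_succ => qo; have [q' okq'] := min_succ_cand qo.
by rewrite /min_succ qo; apply: min_cand_fin okq'.
Qed.

End MinSuccessor.

Section EveReplay.
Variable G : mpg.
Hypothesis wfG : wf_mpg G.
Variable tau : gpos G -> Act G.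
Hypothesis tau_forces : eve_forces G tau.

(* Eve's moves in Gamma_G are read off observations: Adam's answer to the
   observation o is the least successor with support o. *)
Definition actE (x : gpos G) (o : {set St G}) := tau x.
Definition respE (x : gpos G) (o : {set St G}) := min_succ (lastf x) (tau x) o.

Local Notation stpE := (stp actE respE).
Local Notation repE := (rep actE respE).

Definition validE (x : gpos G) (o : {set St G}) :=
  (o \in Obs G) && (o :&: post G (tau x) (supp G (lastf x)) != set0).

Definition okE (x : gpos G) (o : {set St G}) := validE x o /\ InPi G (stpE x o).
Definition backE (x : gpos G) (i : nat) := preceq G 0 (gf G x i) (lastf x).

Local Notation legalE := (legal actE respE okE).

Definition finite_pos (x : gpos G) := forall i, (i <= glen G x)%N ->
  supp G (gf G x i) \in Obs G /\ fin_on (gf G x i).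

Lemma finite_pos_stp x o : InPi G x -> finite_pos x -> nonterminal G x -> validE x o ->
  [/\ InPi G (stpE x o), finite_pos (stpE x o) & supp G (lastf (stpE x o)) = o].
Proof.
move=> Pi_x fin_x nt /andP [oG meet_o].
have [supp_x finf] := fin_x _ (leqnn _).
have o_post := obs_sub_post wfG oG supp_x meet_o.
have supp_o : supp G (lastf (stpE x o)) = o by rewrite lastf_gextend supp_min_succ.
split=> //.
  apply: InPi_gextend => // [i lt_i|]; last exact: min_succ_successor.
  have [suppi fini] := fin_x i (ltnW lt_i).
  have /set0Pn [q qi] := obs_neq0 wfG suppi.
  by have [z fz] := fini q qi; exists q; rewrite fz.
move=> i; rewrite glen_gextend leq_eqVlt => /orP [/eqP ->|lt_i].
  have -> : gf G (stpE x o) (glen G x).+1 = lastf (stpE x o) by rewrite /lastf glen_gextend.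
  rewrite supp_o lastf_gextend; split=> //.
  exact: min_succ_fin.
by rewrite ltnS in lt_i; rewrite gf_gextend //; apply: fin_x.
Qed.

Lemma legalE_inv cs : legalE cs -> InPi G (repE cs) /\ finite_pos (repE cs).
Proof.
elim/last_ind: cs => [|cs o IHcs].
  move=> _; split; first exact: ginit_InPi.
  move=> i; rewrite leqn0 => /eqP ->; rewrite /gf /= supp_fI; split.
    by case: wfG => _ [].
  by move=> q; rewrite supp_fI inE /fI => ->; exists 0%R.
case/legal_rcons => leg nt [valid_o _]; have [Pi_x fin_x] := IHcs leg.
by rewrite rep_rcons; have [] := finite_pos_stp Pi_x fin_x nt valid_o.
Qed.

Lemma legalE_rcons cs o : legalE cs -> nonterminal G (repE cs) -> validE (repE cs) o ->
  legalE (rcons cs o).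
Proof.
move=> leg nt valid_o; apply/legal_rcons; split=> //; split=> //.
by have [Pi_x fin_x] := legalE_inv leg; have [] := finite_pos_stp Pi_x fin_x nt valid_o.
Qed.

Lemma okE_InPi x o : InPi G x -> nonterminal G x -> okE x o -> InPi G (stpE x o).
Proof. by move=> _ _ []. Qed.

Lemma reachedE_term x : reached backE x -> ~ nonterminal G x.
Proof. by move=> TEx [] /(_ TEx). Qed.

Lemma forcesE (xs : nat -> gpos G) : xs 0%N = ginit G ->
  (forall k, nonterminal G (xs k) -> exists2 o, okE (xs k) o & xs k.+1 = stpE (xs k) o) ->
  exists k, reached backE (xs k).
Proof.
move=> xs0 moves; have [|k [TEk _]] := tau_forces xs0; last by exists k.
by move=> k /moves [o [_ Pi_o] ->]; exists (respE (xs k) o).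
Qed.

Lemma legalE_bounded :
  exists D, forall cs, legalE cs -> nonterminal G (repE cs) -> (size cs < D)%N.
Proof. exact: legal_bounded reachedE_term forcesE. Qed.

Lemma legalE_cut cs o : legalE cs -> nonterminal G (repE cs) -> validE (repE cs) o ->
  [/\ legalE (cut actE respE backE (rcons cs o)),
      nonterminal G (repE (cut actE respE backE (rcons cs o))),
      supp G (lastf (repE (cut actE respE backE (rcons cs o)))) = o &
      preceq G 0 (lastf (repE (cut actE respE backE (rcons cs o))))
        (lastf (stpE (repE cs) o))].
Proof.
move=> leg nt valid_o; have [Pi_x fin_x] := legalE_inv leg.
have [_ _ supp_o] := finite_pos_stp Pi_x fin_x nt valid_o.
have okx : okE (repE cs) o.
  by have := legalE_rcons leg nt valid_o; case/legal_rcons.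
have [leg' nt' [Ecut|[j [_ backj _ Elast]]]] :=
  legal_cut_rcons okE_InPi reachedE_term forcesE leg nt okx.
- rewrite Ecut in leg' nt' *; rewrite rep_rcons in nt' *.
  by split=> //; apply: preceq0_refl.
- by rewrite Elast; split=> //; case: backj => -> _.
Qed.

End EveReplay.

Section EveStrategy.
Variable G : mpg.
Hypothesis wfG : wf_mpg G.
Variable tau : gpos G -> Act G.
Hypothesis tau_forces : eve_forces G tau.

Local Notation repE := (rep (actE tau) (respE tau)).
Local Notation legalE := (legal (actE tau) (respE tau) (okE tau)).
Local Notation cutE := (cut (actE tau) (respE tau) (@backE G)).

Variable D : nat.
Hypothesis boundD : forall cs, legalE cs -> nonterminal G (repE cs) -> (size cs < D)%N.

(* [None] is the memory before the initial observation has been read. *)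
Definition memTE := option (D.-bseq {set St G}).

Definition nextE (m : memTE) (o : {set St G}) : seq {set St G} :=
  if m is Some b then cutE (rcons (val b) o) else [::].
Definition updE (m : memTE) (o : {set St G}) : memTE := Some (insub_bseq D (nextE m o)).
Definition outE (m : memTE) (o : {set St G}) : Act G := tau (repE (nextE m o)).
Definition valE (m : memTE) (q : St G) : ext :=
  if m is Some b then lastf (repE (val b)) q else EBot.

Section EvePlay.
Variables (o : nat -> {set St G}) (a : nat -> Act G).
Hypothesis play : valid_play G o a.
Hypothesis consistent : forall n, a n = outE (Defs.memE G memTE None updE o n) (o n).

Let mem n := Defs.memE G memTE None updE o n.
Let cs n := nextE (mem n) (o n).

Lemma valE_succ n : legalE (cs n) -> nonterminal G (repE (cs n)) ->
  valE (mem n.+1) =1 lastf (repE (cs n)).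
Proof. by move=> leg nt q; rewrite /= val_insub_bseq // ltnW // boundD. Qed.

Lemma csE_succ n : legalE (cs n) -> nonterminal G (repE (cs n)) ->
  cs n.+1 = cutE (rcons (cs n) (o n.+1)).
Proof. by move=> leg nt; rewrite /cs /= val_insub_bseq // ltnW // boundD. Qed.

Lemma validE_play n : supp G (lastf (repE (cs n))) = o n -> validE tau (repE (cs n)) (o n.+1).
Proof.
case: play => _ [obs_o step_o] supp_n; rewrite /validE obs_o /= supp_n.
have /existsP [q /andP [qn /existsP [q' /andP [q'n1 dqq']]]] := step_o n.
apply/set0Pn; exists q'; rewrite inE q'n1 in_post; apply/existsP; exists q.
by rewrite qn; move: dqq'; rewrite (consistent n).
Qed.

Lemma csE_inv n :
  [/\ legalE (cs n), nonterminal G (repE (cs n)) & supp G (lastf (repE (cs n))) = o n].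
Proof.
elim: n => [|n [leg nt supp_n]].
  case: play => o0 _; split=> //; first exact: ginit_nonterm.
  by rewrite o0 /lastf /gf /= supp_fI.
have [leg' nt' supp' _] := legalE_cut wfG tau_forces leg nt (validE_play supp_n).
by rewrite csE_succ.
Qed.

Variable qs : nat -> St G.
Hypothesis qs_conc : concretization G o a qs.

(* Adam's answers are least successors, and cutting back only lowers values. *)
Lemma csE_value n : exists2 z, lastf (repE (cs n)) (qs n) = EFin z &
  (z <= \sum_(i < n) wt G (qs i) (a i) (qs i.+1))%R.
Proof.
elim: n => [|n [z val_n le_z]].
  have /eqP -> : qs 0%N == qI G by have [] := qs_conc 0; case: play => -> _; rewrite inE.
  by exists 0%R; rewrite ?big_ord0 // /lastf /gf /= /fI eqxx.
have [leg nt supp_n] := csE_inv n; have valid_n := validE_play supp_n.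
have [_ _ supp' [_ prec]] := legalE_cut wfG tau_forces leg nt valid_n.
have a_n : a n = tau (repE (cs n)) := consistent n.
have [qs_n dq] := qs_conc n; have [qs_n1 _] := qs_conc n.+1.
have okq : cand_ok (lastf (repE (cs n))) (tau (repE (cs n))) (qs n.+1) (qs n).
  by rewrite /cand_ok supp_n qs_n -a_n.
have le_min := min_cand_le okq; rewrite /cand_val val_n /= in le_min.
have := prec (qs n.+1); rewrite supp' lastf_gextend /respE /min_succ qs_n1.
move=> /(_ isT) /le_ext_trans /(_ le_min) /le_ext_EFin [z' val' le_z'].
exists z'; first by rewrite csE_succ.
rewrite big_ord_recr /= a_n.
by apply: le_trans le_z' _; rewrite lerD2r.
Qed.

End EvePlay.

Lemma eve_fm_win : eve_fm_winning G.
Proof.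
exists memTE, None, updE, outE => o a play consistent qs qs_conc.
apply: (mp_nonneg_bounded_below (C := ext_bound valE)) => n.
have [leg nt _] := csE_inv play consistent n.
have [z val_n le_z] := csE_value play consistent qs_conc n.
apply: le_trans le_z; rewrite -(valE_succ leg nt) in val_n.
by have := ext_boundP val_n; lia.
Qed.

End EveStrategy.

Section AdamReplay.
Variable G : mpg.
Variable rho : gpos G -> Act G -> St G -> ext.
Hypothesis rho_forces : adam_forces G rho.

Definition actA (x : gpos G) (s : Act G) := s.
Definition okA (x : gpos G) (s : Act G) := True.
Definition backA (x : gpos G) (i : nat) := preceq G 1 (lastf x) (gf G x i) /\
  exists q, q \in supp G (gf G x i) /\ gf G x i q <> EInf.

Local Notation stpA := (stp actA rho).
Local Notation repA := (rep actA rho).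
Local Notation legalA := (legal actA rho okA).
Local Notation cutA := (cut actA rho backA).

Lemma okA_InPi x s : InPi G x -> nonterminal G x -> okA x s -> InPi G (stpA x s).
Proof. by move=> Pi_x nt _; apply: rho_forces.1. Qed.

Lemma reachedA_term x : reached backA x -> ~ nonterminal G x.
Proof. by move=> TAx [_] /(_ TAx). Qed.

Lemma forcesA (xs : nat -> gpos G) : xs 0%N = ginit G ->
  (forall k, nonterminal G (xs k) -> exists2 s, okA (xs k) s & xs k.+1 = stpA (xs k) s) ->
  exists k, reached backA (xs k).
Proof.
move=> xs0 moves; have [|k [TAk _]] := rho_forces.2 xs xs0; last by exists k.
by move=> k /moves [s _ ->]; exists s.
Qed.

Lemma legalA_bounded :
  exists D, forall cs, legalA cs -> nonterminal G (repA cs) -> (size cs < D)%N.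
Proof. exact: legal_bounded reachedA_term forcesA. Qed.

Lemma rho_successor cs s : legalA cs -> nonterminal G (repA cs) ->
  successor G (lastf (repA cs)) s (rho (repA cs) s).
Proof.
move=> leg nt; apply: InPi_gextend_succ.
exact: rho_forces.1 (legal_InPi okA_InPi leg) nt.
Qed.

Lemma legalA_cut cs s : legalA cs -> nonterminal G (repA cs) ->
  [/\ legalA (cutA (rcons cs s)), nonterminal G (repA (cutA (rcons cs s))),
      supp G (lastf (repA (cutA (rcons cs s)))) = supp G (rho (repA cs) s) &
      cutA (rcons cs s) = rcons cs s \/
      [/\ (size (cutA (rcons cs s)) <= size cs)%N,
          preceq G 1 (rho (repA cs) s) (lastf (repA (cutA (rcons cs s)))) &
          exists q, q \in supp G (lastf (repA (cutA (rcons cs s)))) /\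
                    lastf (repA (cutA (rcons cs s))) q <> EInf]].
Proof.
move=> leg nt.
have [leg' nt' [Ecut|[j [le_j [prec fin] size_j Elast]]]] :=
  legal_cut_rcons okA_InPi reachedA_term forcesA (t := s) leg nt I.
  rewrite Ecut in leg' nt' *; rewrite rep_rcons lastf_gextend in nt' *.
  by split=> //; left.
rewrite lastf_gextend in prec; rewrite Elast size_j.
by split=> //; [rewrite -prec.1 | right].
Qed.

End AdamReplay.

Section AdamStrategy.
Variable G : mpg.
Hypothesis wfG : wf_mpg G.
Variable rho : gpos G -> Act G -> St G -> ext.
Hypothesis rho_forces : adam_forces G rho.

Local Notation repA := (rep (@actA G) rho).
Local Notation legalA := (legal (@actA G) rho (@okA G)).
Local Notation cutA := (cut (@actA G) rho (@backA G)).

Variable D : nat.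
Hypothesis boundD : forall cs, legalA cs -> nonterminal G (repA cs) -> (size cs < D)%N.

Definition memTA := D.-bseq (Act G).

Definition updA (m : memTA) (o : {set St G}) (s : Act G) : memTA :=
  insub_bseq D (cutA (rcons m s)).

Definition obs_answer (o : {set St G}) (s : Act G) : {set St G} :=
  odflt set0 [pick o' in Obs G | o' :&: post G s o != set0].

(* Off the plays of the strategy, any observation compatible with [o] and [s] will do. *)
Definition outA (m : memTA) (o : {set St G}) (s : Act G) : {set St G} :=
  let o' := supp G (rho (repA m) s) in
  if (o' \in Obs G) && (o' :&: post G s o != set0) then o' else obs_answer o s.

Definition valA (m : memTA) (q : St G) : ext := lastf (repA m) q.

Lemma obs_answerP o s : o \in Obs G ->
  obs_answer o s \in Obs G /\ obs_answer o s :&: post G s o != set0.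
Proof.
move=> oG; rewrite /obs_answer; case: pickP => [o' /andP [] //|none].
have /set0Pn [q qo] := obs_neq0 wfG oG.
have [_ [_ [total _]]] := wfG; have [q' dqq'] := total q s.
have [o' o'G q'o'] := obs_cover wfG q'.
have := none o'; rewrite o'G /= => /negbFE /eqP meet0.
suff : q' \in o' :&: post G s o by rewrite meet0 inE.
by rewrite inE q'o' in_post; apply/existsP; exists q; rewrite qo.
Qed.

Lemma outA_valid m o s : o \in Obs G ->
  outA m o s \in Obs G /\ outA m o s :&: post G s o != set0.
Proof. by move=> oG; rewrite /outA; case: ifP => [/andP []|_] //; apply: obs_answerP. Qed.

Lemma outA_rho (m : memTA) o s : legalA m -> nonterminal G (repA m) ->
  supp G (lastf (repA m)) = o ->
  outA m o s = supp G (rho (repA m) s).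
Proof.
move=> leg nt supp_m; have [suppG [sub_post _]] := rho_successor rho_forces s leg nt.
rewrite /outA suppG /=; have /set0Pn [q qrho] := obs_neq0 wfG suppG.
suff -> : supp G (rho (repA m) s) :&: post G s o != set0 by [].
by apply/set0Pn; exists q; rewrite inE qrho -supp_m (subsetP sub_post).
Qed.

Section AdamPlay.
Variables (o : nat -> {set St G}) (a : nat -> Act G).
Hypothesis play : valid_play G o a.
Hypothesis consistent : forall n, o n.+1 = outA (memA G memTA [bseq] updA o a n) (o n) (a n).

Let mem n := memA G memTA [bseq] updA o a n.
Let cs n : seq (Act G) := mem n.

Lemma csA_succ n : legalA (cs n) -> nonterminal G (repA (cs n)) ->
  cs n.+1 = cutA (rcons (cs n) (a n)).
Proof.
move=> leg nt; rewrite /cs /= val_insub_bseq //.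
by apply: leq_trans (size_cut _ _ _ _) _; rewrite size_rcons boundD.
Qed.

Lemma csA_inv n :
  [/\ legalA (cs n), nonterminal G (repA (cs n)) & supp G (lastf (repA (cs n))) = o n].
Proof.
elim: n => [|n [leg nt supp_n]].
  case: play => o0 _; rewrite /cs /= /lastf /gf /= supp_fI o0.
  by split=> //; apply: ginit_nonterm.
have [leg' nt' supp' _] := legalA_cut rho_forces (a n) leg nt.
by rewrite csA_succ // supp' consistent (outA_rho _ leg nt supp_n).
Qed.

Definition reset n : bool := (size (cs n.+1) <= size (cs n))%N.

Lemma csA_grow n : ~~ reset n -> size (cs n.+1) = (size (cs n)).+1.
Proof.
have [leg nt _] := csA_inv n; rewrite /reset csA_succ //.
by have [_ _ _ [->|[-> //]]] := legalA_cut rho_forces (a n) leg nt; rewrite size_rcons.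
Qed.

(* Between two resets the memory grows, and it never reaches length [D]. *)
Lemma steps_le_resets n : (n <= size (cs n) + D * \sum_(k < n) reset k)%N.
Proof.
elim: n => [//|n IHn]; rewrite big_ord_recr /=.
have [leg nt _] := csA_inv n; have lt_D := boundD leg nt.
set R := \sum_(i < n) _ in IHn *.
case: (boolP (reset n)) => [_|/csA_grow ->] /=; first by rewrite mulnDr muln1; lia.
by rewrite addn0 addSn ltnS.
Qed.

Lemma reset_often N : exists n, (N <= n)%N /\ reset n.
Proof.
apply: NNPP => no_reset.
have grow j : size (cs (N + j)) = (size (cs N) + j)%N.
  elim: j => [|j IHj]; first by rewrite !addn0.
  rewrite addnS csA_grow ?IHj ?addnS //; apply/negP => resetj.
  by apply: no_reset; exists (N + j)%N; rewrite leq_addr.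
have [leg nt _] := csA_inv (N + D); have := boundD leg nt; rewrite grow; lia.
Qed.

Lemma csA_val_step n q z : lastf (repA (cs n.+1)) q = EFin z ->
  exists2 z1, rho (repA (cs n)) (a n) q = EFin z1 & (z1 + reset n <= z)%R.
Proof.
have [leg nt _] := csA_inv n; rewrite /reset csA_succ //.
have [_ _ _ [->|[le_size [supp_eq prec] _]]] := legalA_cut rho_forces (a n) leg nt.
  rewrite rep_rcons lastf_gextend size_rcons ltnn => rho_q.
  by exists z; rewrite ?addr0.
move=> val_q; have q_supp : q \in supp G (rho (repA (cs n)) (a n)).
  by rewrite supp_eq inE val_q.
have := prec q q_supp; rewrite val_q le_size.
by case: (rho _ _ q) => //= z1 le_z1; exists z1.
Qed.

Lemma csA_val_back n q z : lastf (repA (cs n.+1)) q = EFin z ->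
  exists q' z', [/\ Delta G q' (a n) q, lastf (repA (cs n)) q' = EFin z' &
    (z' + (wt G q' (a n) q + (reset n)%:R) <= z)%R].
Proof.
move=> val_q; have [z1 rho_q le_z1] := csA_val_step val_q.
have [leg nt _] := csA_inv n.
have [q' [_ dq' val_q']] := successor_back (rho_successor rho_forces (a n) leg nt) rho_q.
exists q', (z1 - wt G q' (a n) q)%R; split=> //.
by rewrite addrA subrK natz.
Qed.

Lemma reset_val n : reset n -> exists q z, lastf (repA (cs n.+1)) q = EFin z.
Proof.
have [leg nt _] := csA_inv n; rewrite /reset csA_succ //.
have [_ _ _ [->|[_ _ [q [qf qfin]]]]] := legalA_cut rho_forces (a n) leg nt.
  by rewrite size_rcons ltnn.
move=> _; exists q; move: qf qfin; rewrite inE.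
by case: (lastf _ q) => // z _ _; exists z.
Qed.

Lemma adam_play_wins : ~ eve_wins_play G o a.
Proof.
move=> eve_wins.
have val0 q z : lastf (repA (cs 0)) q = EFin z -> (0 <= z)%R.
  by rewrite /cs /= /lastf /gf /= /fI; case: eqP => // _ [<-].
have often N : exists n q z, (N <= n)%N /\ lastf (repA (cs n)) q = EFin z.
  have [n [le_N /reset_val [q [z val_q]]]] := reset_often N.
  by exists n.+1, q, z; split=> //; apply: leqW.
have [c path_c] := konig_valued_path (value := fun n => lastf (repA (cs n)))
  (edge := fun n q' q => Delta G q' (a n) q) val0 csA_val_back often.
have conc : concretization G o a c.
  move=> n; have [dc [z val_c _]] := path_c n; split=> //.
  by have [_ _ <-] := csA_inv n; rewrite inE val_c.
apply: (mp_neg_of_linear_decrease (u := fun i => wt G (c i) (a i) (c i.+1))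
  (D := D) (K := D * (ext_bound valA).+1)).
- by have [leg nt _] := csA_inv 0; apply: leq_ltn_trans (boundD leg nt).
- move=> n; have [_ [z val_c le_z]] := path_c n.
  have le_C := ext_boundP (val_c : valA (mem n) (c n) = EFin z).
  rewrite big_split /= -natr_sum natz in le_z.
  have le_zC : (z <= (ext_bound valA)%:Z)%R by move: le_C; lia.
  have := ler_wpM2l (ler0n _ D) (le_trans le_z le_zC); rewrite mulrDr natz.
  have [leg nt _] := csA_inv n; have := boundD leg nt; have := steps_le_resets n.
  move: (\sum_(k < n) reset k) (\sum_(i < n) wt G (c i) (a i) (c i.+1))%R => R S; lia.
- exact: eve_wins conc.
Qed.

End AdamPlay.

Lemma adam_fm_win : adam_fm_winning G.
Proof.
exists memTA, [bseq], updA, outA; split; last exact: adam_play_wins.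
by move=> o a n [_ [obs_o _]] _ s; apply/outA_valid/obs_o.
Qed.

End AdamStrategy.

Theorem theorem4 (G : mpg) :
  wf_mpg G -> forcibly_terminating G ->
  eve_fm_winning G \/ adam_fm_winning G.
Proof.
move=> wfG [[tau tau_forces]|[rho rho_forces]].
  left; have [D boundD] := legalE_bounded tau_forces.
  exact (eve_fm_win wfG tau_forces boundD).
right; have [D boundD] := legalA_bounded rho_forces.
exact (adam_fm_win wfG rho_forces boundD).
Qed.
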